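(* Let $M$ be a deterministic classical Turing machine operating in time $f(n)$, where $n$ is the input size. Then there exists a measurement-based quantum Turing machine $M'$ operating in expected time $O(f(n))$ such that for every input $x$, $M(x)=M'(\ket x)$.
   Context: A deterministic Turing machine (TM) is a triple $M=(K,\Sigma,\delta)$: $K$ finite set of states with initial state $s$, $\Sigma$ finite alphabet containing a blank $\#$, $\delta:K\times\Sigma\to(K\cup\{\text{yes},\text{no},h\})\times\Sigma\times\{\leftarrow,\rightarrow,-\}$; its output is yes/no if that state is reached, and the final tape contents if $h$ is reached (for a quantum machine ending in $h$, equality of outputs means the final quantum tape is the basis state encoding the classical tape contents). A (one-tape) classically-controlled quantum Turing machine (CQTM) is a quintuple $M=(K,\Sigma_C,\Sigma_Q,\mathcal A,\delta)$: $K$ finite set of classical states with initial state $s$; $\Sigma_Q$ finite alphabet containing blank $\#$, labelling an orthonormal basis of each quantum cell of an infinite tape; $\Sigma_C$ finite alphabet of classical outcomes containing $\#,\overline\#$; $\mathcal A$ finite set of one-cell admissible transformations (families $\{M_c\}_c$ of operators with $\sum_c M_c^\dagger M_c=\mathrm{Id}$, outcomes in $\Sigma_C$) containing the blank test $\{\ket\#\bra\#,I-\ket\#\bra\#\}$; $\delta:K\times\Sigma_C\to(K\cup\{\text{yes},\text{no},h\})\times\{\leftarrow,\rightarrow,-\}\times\mathcal A$ total. At each step (one time unit), in state $q$ with last outcome $\tau$ and $\delta(q,\tau)=(p,D,A)$, the head moves by $D$, then $A=\{M_c\}$ is applied to the pointed cell, yielding outcome $c$ with probability $\bra\psi M_c^\dagger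 M_c\ket\psi$ and new tape state $M_c\ket\psi$ normalized; the new state is $p$, last outcome $c$. The input is placed on adjacent cells (others $\ket\#$), the head starts on the blank cell just left of the input, initial state $s$, initial last outcome $\#$. Halting on yes/no gives that output; halting on $h$ gives the state of the tape from its leftmost to rightmost non-$\ket\#$ cell. A measurement-based quantum Turing machine (MQTM) is a CQTM all of whose admissible transformations in $\mathcal A$ are projective measurements, i.e. families $\{P_k\}$ of orthogonal projectors with $P_kP_l=\delta_{kl}P_k$ and $\sum_k P_k=\mathrm{Id}$. Its running time is a random variable; ''expected time'' refers to its expectation. *)

From HB Require Import structures.
From mathcomp Require Import all_boot all_order all_algebra.
From mathcomp Require Import all_classical all_reals all_analysis.
From mathcomp Require Import complex.
Set Implicit Arguments.
Unset Strict Implicit.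
Unset Printing Implicit Defensive.
Import Order.TTheory GRing.Theory Num.Theory.
Local Open Scope ring_scope.

Inductive dir := DLeft | DRight | DStay.

Definition move (h : int) (D : dir) : int :=
  match D with DLeft => h - 1 | DRight => h + 1 | DStay => h end.

Inductive hstate := HYes | HNo | HHalt.

Definition halted {K : Type} (q : K + hstate) : bool :=
  if q is inr _ then true else false.

Definition upd {T : Type} (t : int -> T) (i : int) (a : T) : int -> T :=
  fun j => if j == i then a else t j.

(* input x written on cells 1..|x|, all other cells blank; the head
   starts on cell 0, the blank cell just left of the input *)
Definition input_tape {T : Type} (b : T) (x : seq T) : int -> T :=
  fun i => match i with Posz k.+1 => nth b x k | _ => b end.

(* [tape_contents b t s]: s is the contents of tape t from its leftmost
   to its rightmost non-blank cell (s = [::] iff t is all blank). *)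
Definition tape_contents {T : eqType} (b : T) (t : int -> T) (s : seq T) : Prop :=
  (s = [::] /\ forall i, t i = b) \/
  (exists l : int,
     [/\ head b s != b, last b s != b,
         forall k : nat, (k < size s)%N -> t (l + k%:Z) = nth b s k
       & forall i : int, (i < l \/ l + (size s)%:Z <= i) -> t i = b]).

Inductive tm_out (T : Type) := OYes | ONo | OTape of seq T.
Arguments OYes {T}. Arguments ONo {T}.

Section DTM.
Variables (K Sig : finType) (s : K) (blank : Sig)
          (delta : K -> Sig -> (K + hstate) * Sig * dir).

Definition dconfig := ((K + hstate) * (int -> Sig) * int)%type.

Definition dstep (c : dconfig) : dconfig :=
  let: (q, t, h) := c in
  match q with
  | inl q0 => let: (p, a, D) := delta q0 (t h) in (p, upd t h a, move h D)
  | inr _ => c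
  end.

Definition drun (x : seq Sig) (k : nat) : dconfig :=
  iter k dstep (inl s, input_tape blank x, 0%:Z).

Definition valid_input (x : seq Sig) : bool := blank \notin x.

Definition dtm_time (f : nat -> nat) : Prop :=
  forall x, valid_input x -> halted (drun x (f (size x))).1.1.

Definition dtm_output (x : seq Sig) (o : tm_out Sig) : Prop :=
  exists k, match (drun x k) with
            | (inr HYes, _, _) => o = OYes
            | (inr HNo, _, _) => o = ONo
            | (inr HHalt, t, _) => exists w, o = OTape w /\ tape_contents blank t w
            | (inl _, _, _) => False
            end.
End DTM.

(* A one-cell operator is given by its matrix: op u v = <u| O |v>.
   An admissible transformation is a family {M_c}_{c in SigC}
   (M_c = 0 for unused outcomes) with sum_c M_c^dagger M_c = Id. *)
Definition admissible (R : realType) (SC SQ : finType)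
    (M : SC -> SQ -> SQ -> R[i]) : Prop :=
  forall u v : SQ,
    \sum_(c : SC) \sum_(w : SQ) conjc (M c w u) * M c w v = (u == v)%:R.

Definition projective (R : realType) (SC SQ : finType)
    (M : SC -> SQ -> SQ -> R[i]) : Prop :=
  [/\ forall c u v, M c u v = conjc (M c v u),
      forall c d u v, \sum_(w : SQ) M c u w * M d w v = if c == d then M c u v else 0
    & forall u v, \sum_(c : SC) M c u v = (u == v)%:R].

Definition blank_test (R : realType) (SC SQ : finType) (cb cbbar : SC) (qb : SQ)
    (M : SC -> SQ -> SQ -> R[i]) : Prop :=
  forall c u v, M c u v =
    if c == cb then ((u == qb) && (v == qb))%:R
    else if c == cbbar then ((u == v) && (u != qb))%:R
    else 0.

Record CQTM (R : realType) := MkCQTM {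
  qK : finType;
  qSC : finType;
  qSQ : finType;
  qA : finType;
  qs : qK;
  qblank : qSQ;
  qcb : qSC;
  qcbbar : qSC;
  qop : qA -> qSC -> qSQ -> qSQ -> R[i];
  qdelta : qK -> qSC -> (qK + hstate) * dir * qA;
  qcb_neq : qcb != qcbbar;
  qop_adm : forall a, admissible (qop a);
  qop_blank : exists a, blank_test qcb qcbbar qblank (qop a)
}.
Arguments qop {R} c _ _ _ _ : rename.
Arguments qdelta {R} c _ _ : rename.

Definition is_MQTM (R : realType) (M : CQTM R) : Prop :=
  forall a, projective (qop M a).

Section CQTM_semantics.
Variables (R : realType) (M : CQTM R).

Definition qtape := int -> qSQ M.
(* (unnormalized) state of the quantum tape: amplitude of each basis tape *)
Definition qstate := qtape -> R[i].

Definition sqmod (z : R[i]) : R := complex.Re z ^+ 2 + complex.Im z ^+ 2.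

Definition sqnorm (psi : qstate) : \bar R :=
  \esum_(t in [set: qtape]) (sqmod (psi t))%:E.

Definition apply1 (O : qSQ M -> qSQ M -> R[i]) (i : int) (psi : qstate) : qstate :=
  fun t => \sum_(a : qSQ M) O (t i) a * psi (upd t i a).

(* configuration: state, last outcome, head position, unnormalized tape
   state (M_{c_k} ... M_{c_1} |x>, so that the probability of the outcome
   history c_1..c_k is its squared norm) *)
Definition qconfig := ((qK M + hstate) * qSC M * int * qstate)%type.

Definition qstep (cf : qconfig) (c : qSC M) : qconfig :=
  let: (q, tau, h, psi) := cf in
  match q with
  | inl q0 => let: (p, D, a) := qdelta M q0 tau in
              let h' := move h D in (p, c, h', apply1 (qop M a c) h' psi)
  | inr _ => cf
  end.

Definition ket_input (x : seq (qSQ M)) : qstate :=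
  fun t => if t == input_tape (qblank M) x then 1 else 0.

Definition qinit (x : seq (qSQ M)) : qconfig := (inl (qs M), qcb M, 0%:Z, ket_input x).

Definition qrun (x : seq (qSQ M)) (hs : seq (qSC M)) : qconfig :=
  foldl qstep (qinit x) hs.

Definition halts_exactly (x : seq (qSQ M)) (hs : seq (qSC M)) : bool :=
  halted (qrun x hs).1.1.1 && ~~ halted (qrun x (take (size hs).-1 hs)).1.1.1.

Definition prob_time (x : seq (qSQ M)) (k : nat) : \bar R :=
  (\sum_(hs : k.-tuple (qSC M) | halts_exactly x hs) sqnorm (qrun x hs).2)%E.

Definition halts_as (x : seq (qSQ M)) : Prop :=
  (\sum_(k <oo) prob_time x k)%E = 1%E.

Definition expected_time (x : seq (qSQ M)) : \bar R :=
  (\sum_(k <oo) ((k%:R)%:E * prob_time x k))%E.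

(* the output on a halting branch (state hs, tape state psi) is o: for h,
   the final quantum tape is (up to a nonzero scalar, i.e. after
   normalization up to a global phase) a basis state |t>, with t having
   contents w *)
Definition qout_is (q : qK M + hstate) (psi : qstate) (o : tm_out (qSQ M)) : Prop :=
  match q with
  | inr HYes => o = OYes
  | inr HNo => o = ONo
  | inr HHalt => exists w, o = OTape w /\
       exists (t : qtape) (lam : R[i]), [/\ lam != 0, psi t = lam,
          forall t', t' != t -> psi t' = 0 & tape_contents (qblank M) t w]
  | inl _ => False
  end.

Definition cqtm_output (x : seq (qSQ M)) (o : tm_out (qSQ M)) : Prop :=
  halts_as x /\
  forall hs : seq (qSC M), halts_exactly x hs -> (0 < sqnorm (qrun x hs).2)%E ->
    qout_is (qrun x hs).1.1.1 (qrun x hs).2 o.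

End CQTM_semantics.
Arguments sqnorm {R} M psi.
Arguments apply1 {R} M O i psi _.
Arguments qstep {R} M cf c.
Arguments ket_input {R} M x _.
Arguments qinit {R} M x.
Arguments qrun {R} M x hs.
Arguments halts_exactly {R} M x hs.
Arguments prob_time {R} M x k.
Arguments halts_as {R} M x.
Arguments expected_time {R} M x.
Arguments qout_is {R} M q psi o.
Arguments cqtm_output {R} M x o.

Definition map_out {A B : Type} (g : A -> B) (o : tm_out A) : tm_out B :=
  match o with OYes => OYes | ONo => ONo | OTape w => OTape (map g w) end.

From HB Require Import structures.
From mathcomp Require Import all_boot all_order all_algebra.
From mathcomp Require Import all_classical all_reals all_analysis.
From mathcomp Require Import complex.
From mathcomp Require Import ring lra.
Import Order.TTheory GRing.Theory Num.Theory.
Local Open Scope ring_scope.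
Set Implicit Arguments.
Unset Strict Implicit.
Unset Printing Implicit Defensive.

(* The simulator keeps its tape in a basis state and reads a cell by measuring
   it in the computational basis. Projective measurements cannot write, so a
   symbol [a] is replaced by [b] by alternating a measurement against the
   uniform superposition of all symbols with a basis measurement, until [b] is
   read; each round succeeds with probability at least [1/n^2], where [n] is
   the size of the alphabet.
   Along every outcome history the tape is a real multiple of a basis tape (or
   of its image under one uniform projection), so the quantum run is tracked by
   a classical symbolic run. A potential charging [2 n^2 + 1] per remaining
   step of the classical machine decreases by at least one per step in
   expectation; this bounds the expected running time by
   [(2 n^2 + 1) (f(n) + 1)] and forces halting with probability one. *)

Lemma sum_delta_l (R : pzSemiRingType) (T : finType) (u : T) (g : T -> R) :
  \sum_(x : T) (u == x)%:R * g x = g u.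
Proof.
rewrite (bigD1 u) //= eqxx mul1r big1 ?addr0 // => x /negbTE.
by rewrite eq_sym => ->; rewrite mul0r.
Qed.

Lemma sum_delta_r (R : pzSemiRingType) (T : finType) (u : T) (g : T -> R) :
  \sum_(x : T) g x * (x == u)%:R = g u.
Proof.
rewrite (bigD1 u) //= eqxx mulr1 big1 ?addr0 // => x /negbTE ->.
by rewrite mulr0.
Qed.

Lemma sum_delta_sq (R : pzRingType) (T : finType) (lam : R) (u : T) :
  \sum_(x : T) (lam * (x == u)%:R) ^+ 2 = lam ^+ 2.
Proof.
rewrite (bigD1 u) //= eqxx mulr1 big1 ?addr0 // => x /negbTE ->.
by rewrite mulr0 expr0n.
Qed.

Lemma mulf_neq0_split (R : idomainType) (a b : R) : a * b != 0 -> a != 0 /\ b != 0.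
Proof. by rewrite mulf_eq0 negb_or => /andP. Qed.

Lemma natr_bool_neq0 (R : numDomainType) (b : bool) : (b%:R : R) != 0 -> b.
Proof. by case: b; rewrite ?eqxx. Qed.

Section TupleSums.
Variables (V : nmodType) (C : finType).

Lemma sum_tuple0 (F : 0.-tuple C -> V) : \sum_(t : 0.-tuple C) F t = F [tuple].
Proof.
by rewrite (bigD1 [tuple]) //= big1 ?addr0 // => t; rewrite (tuple0 t) => /negP.
Qed.

Lemma sum_tuple_cons k (F : seq C -> V) :
  \sum_(t : k.+1.-tuple C) F t = \sum_(c : C) \sum_(t : k.-tuple C) F (c :: t).
Proof.
rewrite pair_bigA /= (reindex (fun p : C * k.-tuple C => cons_tuple p.1 p.2)) //=.
exists (fun t : k.+1.-tuple C => (thead t, behead_tuple t)).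
- by case=> c t _ /=; rewrite theadE; congr pair; apply: val_inj.
- by move=> [[|c t] //= ?] _; apply: val_inj.
Qed.

Lemma sum_tuple_rcons k (F : seq C -> V) :
  \sum_(t : k.+1.-tuple C) F t = \sum_(t : k.-tuple C) \sum_(c : C) F (rcons t c).
Proof.
elim: k F => [|k IHk] F.
  by rewrite sum_tuple_cons sum_tuple0; apply: eq_bigr => c _; rewrite sum_tuple0.
rewrite sum_tuple_cons (sum_tuple_cons k (fun t => \sum_c F (rcons t c))).
by apply: eq_bigr => c _; rewrite (IHk (fun t => F (c :: t))).
Qed.
End TupleSums.

(** * Expected stopping time from a decreasing potential *)

(* [W hs] is the probability of the outcome history [hs] and [Phi] a potential
   that drops by one in expectation at every step of a running history. *)
Section StoppingTime.
Variables (R : realType) (C : finType) (W Phi : seq C -> R) (stopped : pred (seq C)).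
Hypotheses (W_nil : W [::] = 1) (not_stopped_nil : ~~ stopped [::])
  (W_ge0 : forall hs, 0 <= W hs) (Phi_ge0 : forall hs, 0 <= Phi hs)
  (stopped_rcons : forall hs c, stopped hs -> stopped (rcons hs c))
  (W_mass : forall hs, ~~ stopped hs -> \sum_(c : C) W (rcons hs c) = W hs)
  (Phi_drift : forall hs, ~~ stopped hs ->
     \sum_(c : C | ~~ stopped (rcons hs c)) W (rcons hs c) * Phi (rcons hs c)
       <= W hs * (Phi hs - 1)).

Definition stop_prob k : R :=
  \sum_(t : k.-tuple C | stopped t && ~~ stopped (take k.-1 t)) W t.
Definition alive_mass k : R := \sum_(t : k.-tuple C | ~~ stopped t) W t.
Definition alive_potential k : R := \sum_(t : k.-tuple C | ~~ stopped t) W t * Phi t.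

Lemma stop_prob0 : stop_prob 0 = 0.
Proof. by rewrite /stop_prob big_mkcond sum_tuple0 /= (negbTE not_stopped_nil). Qed.

Lemma stop_prob_ge0 k : 0 <= stop_prob k.
Proof. exact: sumr_ge0. Qed.

Lemma alive_mass0 : alive_mass 0 = 1.
Proof. by rewrite /alive_mass big_mkcond sum_tuple0 not_stopped_nil. Qed.

Lemma alive_mass_ge0 k : 0 <= alive_mass k.
Proof. exact: sumr_ge0. Qed.

Lemma alive_potential0 : alive_potential 0 = Phi [::].
Proof. by rewrite /alive_potential big_mkcond sum_tuple0 not_stopped_nil W_nil mul1r. Qed.

Lemma alive_potential_ge0 k : 0 <= alive_potential k.
Proof. by apply: sumr_ge0 => t _; apply: mulr_ge0. Qed.

Lemma take_rcons_tuple k (t : k.-tuple C) c : take k (rcons t c) = t.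
Proof. by rewrite -cats1 -{1}(size_tuple t) take_size_cat. Qed.

Lemma alive_massS k : alive_mass k = stop_prob k.+1 + alive_mass k.+1.
Proof.
rewrite /stop_prob /alive_mass [in RHS]big_mkcond [X in _ + X]big_mkcond /=.
rewrite (sum_tuple_rcons _ (fun t => if stopped t && ~~ stopped (take k t) then W t else 0)).
rewrite (sum_tuple_rcons _ (fun t => if ~~ stopped t then W t else 0)) -big_split big_mkcond.
apply: eq_bigr => t _; rewrite -big_split /=.
case: ifPn => [alive | /negPn dead]; last first.
  by rewrite big1 // => c _; rewrite take_rcons_tuple stopped_rcons // dead addr0.
rewrite -(W_mass alive); apply: eq_bigr => c _; rewrite take_rcons_tuple alive andbT.
by case: (stopped _); rewrite ?addr0 ?add0r.
Qed.

Lemma alive_potentialS k : alive_potential k.+1 + alive_mass k <= alive_potential k.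
Proof.
rewrite /alive_potential /alive_mass [X in X + _]big_mkcond /=.
rewrite (sum_tuple_rcons _ (fun t => if ~~ stopped t then W t * Phi t else 0)).
rewrite [X in _ + X]big_mkcond -big_split [X in _ <= X]big_mkcond /=.
apply: ler_sum => t _; case: ifPn => [alive | /negPn dead].
  by have := Phi_drift alive; rewrite mulrBr mulr1 lerBrDr big_mkcond.
by rewrite big1 ?addr0 // => c _; rewrite stopped_rcons.
Qed.

Lemma sum_alive_mass_le n : \sum_(k < n) alive_mass k <= Phi [::].
Proof.
suff : \sum_(k < n) alive_mass k + alive_potential n <= Phi [::].
  by apply: le_trans; rewrite lerDl alive_potential_ge0.
elim: n => [|n IHn]; first by rewrite big_ord0 add0r alive_potential0.
rewrite big_ord_recr /= -addrA; apply: le_trans IHn; rewrite lerD2l addrC.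
exact: alive_potentialS.
Qed.

Lemma sum_stop_prob n : \sum_(k < n.+1) stop_prob k = 1 - alive_mass n.
Proof.
elim: n => [|n IHn]; first by rewrite big_ord1 stop_prob0 alive_mass0 subrr.
by rewrite big_ord_recr /= IHn (alive_massS n); ring.
Qed.

Lemma alive_mass_nonincr m n : (m <= n)%N -> alive_mass n <= alive_mass m.
Proof.
move=> /subnK <-; elim: (n - m)%N => [|d IHd] //.
by apply: le_trans _ IHd; rewrite addSn (alive_massS (d + m)) lerDr stop_prob_ge0.
Qed.

Lemma alive_mass_le n : n.+1%:R * alive_mass n <= Phi [::].
Proof.
apply: le_trans (sum_alive_mass_le n.+1).
rewrite mulr_natl -[in X in _ *+ X](card_ord n.+1) -sumr_const; apply: ler_sum => k _.
by apply: alive_mass_nonincr; rewrite -ltnS.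
Qed.

Lemma sum_time_stop_prob n :
  \sum_(k < n.+1) k%:R * stop_prob k + n%:R * alive_mass n = \sum_(k < n) alive_mass k.
Proof.
elim: n => [|n IHn]; first by rewrite big_ord1 big_ord0 !mul0r addr0.
rewrite big_ord_recr /= [RHS]big_ord_recr /= -IHn (alive_massS n) -!natr1; ring.
Qed.

Lemma stop_prob_series : (\sum_(k <oo) (stop_prob k)%:E)%E = 1%E.
Proof.
apply/le_anti/andP; split.
  apply: lime_le; first by apply: is_cvg_nneseries => n _ _; rewrite lee_fin stop_prob_ge0.
  apply: nearW => -[|n]; first by rewrite big_geq.
  by rewrite sumEFin big_mkord sum_stop_prob lee_fin lerBlDr lerDl alive_mass_ge0.
apply/lee_addgt0Pr => e e_gt0.
have Phi_e_ge0 : 0 <= Phi [::] / e by rewrite divr_ge0 // ltW.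
pose n := Num.Def.archi_bound (Phi [::] / e).
have small_mass : alive_mass n <= e.
  rewrite -(@ler_pM2l _ n.+1%:R) ?ltr0Sn //; apply: le_trans (alive_mass_le n) _.
  rewrite -ler_pdivrMr //; apply: le_trans (ltW (archi_boundP Phi_e_ge0)) _.
  by rewrite ler_nat.
apply: le_trans (_ : (\sum_(0 <= k < n.+1) (stop_prob k)%:E + e%:E <= _)%E).
  by rewrite sumEFin big_mkord sum_stop_prob -EFinD lee_fin -addrA lerDl addrC subr_ge0.
rewrite leeD2r //; apply: nneseries_lim_ge => k _ _; rewrite lee_fin; exact: stop_prob_ge0.
Qed.

Lemma expected_stop_time_le :
  (\sum_(k <oo) ((k%:R)%:E * (stop_prob k)%:E) <= (Phi [::])%:E)%E.
Proof.
apply: lime_le.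
  by apply: is_cvg_nneseries => n _ _; rewrite mule_ge0 ?lee_fin ?stop_prob_ge0.
apply: nearW => -[|n]; first by rewrite big_geq // lee_fin.
rewrite (eq_bigr (fun k => (k%:R * stop_prob k)%:E)); last by move=> k _; rewrite EFinM.
rewrite sumEFin big_mkord lee_fin; apply: le_trans (sum_alive_mass_le n).
by rewrite -sum_time_stop_prob lerDl mulr_ge0 ?alive_mass_ge0.
Qed.

End StoppingTime.

(** * One-cell measurements *)

Section Outcomes.
Variable Sig : finType.

(* [Hit] and [Miss] are the two outcomes of the binary tests: # and #bar for the
   blank test, the uniform superposition and its complement for the uniform test. *)
Inductive outcome := Read of Sig | Hit | Miss.

Definition outcome_code (c : outcome) : Sig + bool :=
  match c with Read w => inl w | Hit => inr true | Miss => inr false end.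
Definition outcome_decode (c : Sig + bool) : outcome :=
  match c with inl w => Read w | inr true => Hit | inr false => Miss end.
Lemma outcome_codeK : cancel outcome_code outcome_decode. Proof. by case. Qed.
Lemma outcome_decodeK : cancel outcome_decode outcome_code. Proof. by case=> [|[]]. Qed.
HB.instance Definition _ := Finite.copy outcome (can_type outcome_codeK).

Lemma Read_eqE (w x : Sig) : (Read w == Read x) = (w == x).
Proof. by []. Qed.

Lemma sum_outcome (V : nmodType) (g : outcome -> V) :
  \sum_(c : outcome) g c = \sum_(w : Sig) g (Read w) + g Hit + g Miss.
Proof.
rewrite (reindex outcome_decode) /=; last first.
  by exists outcome_code => c _; rewrite ?outcome_codeK ?outcome_decodeK.
by rewrite big_sumType /= big_bool addrA.
Qed.

End Outcomes.
Arguments Hit {Sig}.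
Arguments Miss {Sig}.

Inductive mkind := BlankTest | Basis | UniformTest.

Definition mkind_code (A : mkind) : option bool :=
  match A with BlankTest => None | Basis => Some true | UniformTest => Some false end.
Definition mkind_decode (a : option bool) : mkind :=
  match a with None => BlankTest | Some true => Basis | Some false => UniformTest end.
Lemma mkind_codeK : cancel mkind_code mkind_decode. Proof. by case. Qed.
HB.instance Definition _ := Finite.copy mkind (can_type mkind_codeK).

Definition real_projective (R : realType) (SC SQ : finType) (F : SC -> SQ -> SQ -> R) :=
  [/\ forall c u v, F c u v = F c v u,
      forall c d u v, \sum_(w : SQ) F c u w * F d w v = if c == d then F c u v else 0
    & forall u v, \sum_(c : SC) F c u v = (u == v)%:R].

Section Measurements.
Variables (R : realType) (Sig : finType) (blank : Sig).

Local Notation outcome := (outcome Sig).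
Local Notation n := (#|Sig|%:R : R).

Definition meas (A : mkind) (c : outcome) (u v : Sig) : R :=
  match A, c with
  | BlankTest, Hit => ((u == blank) && (v == blank))%:R
  | BlankTest, Miss => ((u == v) && (u != blank))%:R
  | Basis, Read w => ((u == w) && (v == w))%:R
  | UniformTest, Hit => n^-1 (* |+><+| with |+> = n^-1/2 sum_w |w> *)
  | UniformTest, Miss => (u == v)%:R - n^-1
  | _, _ => 0
  end.

Lemma card_Sig_neq0 : n != 0.
Proof. by rewrite pnatr_eq0 -lt0n; apply/card_gt0P; exists blank. Qed.

Lemma sum_inv_card_sq : \sum_(w : Sig) n^-1 * n^-1 = n^-1.
Proof. by rewrite sumr_const -(mulr_natr (n^-1 * n^-1)) -mulrA mulVf ?mulr1 ?card_Sig_neq0. Qed.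

Lemma blank_test_projective : real_projective (meas BlankTest).
Proof.
split.
- case=> [w||] u v //=; first by rewrite andbC.
  by case: (u =P v) => [->|/eqP ne]; rewrite ?eqxx // [v == u]eq_sym (negbTE ne).
- case=> [w||] [w'||] u v /=; rewrite ?if_same;
    try by rewrite big1 // => x _; rewrite ?mul0r ?mulr0.
  + rewrite (bigD1 blank) //= big1; last by move=> x /negbTE ->; rewrite andbF mul0r.
    by rewrite eqxx addr0 ?andbT -natrM mulnb.
  + by rewrite big1 // => x _; case: (x =P blank) => [->|_];
      rewrite ?eqxx ?andbN ?andbF ?mulr0 ?mul0r.
  + by rewrite big1 // => x _; case: (x =P blank) => [->|_];
      rewrite ?eqxx ?andbN ?andbF ?mulr0 ?mul0r.
  + rewrite (bigD1 u) //= big1; last by move=> x /negbTE; rewrite eq_sym => ->; rewrite mul0r.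
    by rewrite eqxx addr0 -natrM mulnb; case: (u =P v) => [->|]; rewrite ?andbb ?andbF.
- move=> u v; rewrite sum_outcome big1 //= add0r.
  case: (u =P blank) => [->|_] /=; first by rewrite andbF addr0 eq_sym.
  by rewrite andbT add0r.
Qed.

Lemma basis_projective : real_projective (meas Basis).
Proof.
split.
- by case=> [w||] u v //=; rewrite andbC.
- case=> [w||] [w'||] u v /=; rewrite ?if_same;
    try by rewrite big1 // => x _; rewrite ?mul0r ?mulr0.
  rewrite (bigD1 w) //= big1; last by move=> x /negbTE ->; rewrite andbF mul0r.
  rewrite addr0 eqxx ?andbT; case: (w =P w') => [<-|/eqP ne].
    by rewrite eqxx -natrM mulnb.
  by rewrite (_ : (Read w == Read w') = false) ?mulr0 //; apply/negbTE.
- move=> u v; rewrite sum_outcome /= !addr0.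
  rewrite (bigD1 u) //= eqxx big1 ?addr0; last by move=> x /negbTE; rewrite eq_sym => ->.
  by rewrite eq_sym.
Qed.

Lemma uniform_projective : real_projective (meas UniformTest).
Proof.
have sum_orth v : \sum_(x : Sig) n^-1 * ((x == v)%:R - n^-1) = 0.
  by under eq_bigr do rewrite mulrBr; rewrite sumrB sum_inv_card_sq sum_delta_r subrr.
split.
- by case=> [w||] u v //=; rewrite eq_sym.
- case=> [w||] [w'||] u v /=; rewrite ?if_same;
    try by rewrite big1 // => x _; rewrite ?mul0r ?mulr0.
  + exact: sum_inv_card_sq.
  + exact: sum_orth.
  + by under eq_bigr do rewrite mulrC eq_sym; exact: sum_orth.
  + by under eq_bigr do rewrite mulrBl; rewrite sumrB sum_delta_l sum_orth subr0.
- by move=> u v; rewrite sum_outcome /= big1 // add0r addrC subrK.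
Qed.

Lemma meas_projective A : real_projective (meas A).
Proof.
by case: A; [exact: blank_test_projective | exact: basis_projective | exact: uniform_projective].
Qed.

Definition uniform_mass (c : outcome) : R :=
  match c with Read _ => 0 | Hit => n^-1 | Miss => 1 - n^-1 end.

Lemma card_Sig_ge1 : 1 <= n.
Proof. by rewrite ler1n; apply/card_gt0P; exists blank. Qed.

Lemma inv_card_Sig_le1 : n^-1 <= 1.
Proof. by rewrite invf_le1 ?card_Sig_ge1 // (lt_le_trans ltr01 card_Sig_ge1). Qed.

Lemma uniform_mass_ge0 c : 0 <= uniform_mass c.
Proof.
by case: c => //=; rewrite ?subr_ge0 ?inv_card_Sig_le1 // invr_ge0 ler0n.
Qed.

Lemma sum_uniform_mass : \sum_(c : outcome) uniform_mass c = 1.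
Proof. by rewrite sum_outcome big1 // add0r addrC subrK. Qed.

Lemma sum_uniform_sq c a : \sum_(w : Sig) meas UniformTest c w a ^+ 2 = uniform_mass c.
Proof.
case: c => [w0||] /=.
- by rewrite big1 // => w _; rewrite expr0n.
- by under eq_bigr do rewrite expr2; exact: sum_inv_card_sq.
- have sq w : ((w == a)%:R - n^-1) ^+ 2 = (1 - 2 * n^-1) * (w == a)%:R + n^-1 * n^-1.
    by case: (w == a); rewrite /=; ring.
  by under eq_bigr do rewrite sq; rewrite big_split /= sum_delta_r sum_inv_card_sq; ring.
Qed.

(* After a uniform measurement of a cell holding [a], a basis measurement
   finds any other symbol [b] with conditional probability at least [1/n^2]. *)
Lemma uniform_hit_le c (a b : Sig) : a != b ->
  uniform_mass c <= (n * meas UniformTest c b a) ^+ 2.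
Proof.
move=> ab; have := inv_card_Sig_le1; have : 0 <= n^-1 by rewrite invr_ge0 ler0n.
case: c => [w||]; cbn [meas uniform_mass] => inv_ge0 inv_le1; first exact: sqr_ge0.
  by rewrite (mulfV card_Sig_neq0) expr1n.
by rewrite eq_sym (negbTE ab) sub0r mulrN sqrrN (mulfV card_Sig_neq0) expr1n; lra.
Qed.

End Measurements.
Arguments meas : simpl never.

Section ComplexMeasurements.
Variables (R : realType) (SC SQ : finType).
Local Open Scope complex_scope.

Lemma projective_admissible (M : SC -> SQ -> SQ -> R[i]) : projective M -> admissible M.
Proof.
case=> sym orth compl u v.
under eq_bigr => c _ do under eq_bigr => w _ do rewrite -sym.
by under eq_bigr => c _ do rewrite orth eqxx; exact: compl.
Qed.

Lemma real_projective_complex (F : SC -> SQ -> SQ -> R) :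
  real_projective F -> projective (fun c u v => (F c u v)%:C).
Proof.
case=> sym orth compl; split.
- by move=> c u v; rewrite conjc_real sym.
- move=> c d u v; under eq_bigr do rewrite -rmorphM.
  by rewrite -rmorph_sum orth; case: ifP => _ //; rewrite rmorph0.
- by move=> u v; rewrite -rmorph_sum compl rmorph_nat.
Qed.
End ComplexMeasurements.

Section Tapes.
Variable Sig : finType.
Implicit Types (t T : int -> Sig) (i : int) (a b w : Sig).

Lemma upd_at t i a : upd t i a i = a.
Proof. by rewrite /upd eqxx. Qed.

Lemma upd_upd t i a b : upd (upd t i a) i b = upd t i b.
Proof. by apply/funext => j; rewrite /upd; case: eqP. Qed.

Lemma upd_id t i : upd t i (t i) = t.
Proof. by apply/funext => j; rewrite /upd; case: eqP => [->|]. Qed.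

Lemma tape_eqE t T i : (t == T) = (t i == T i) && (upd t i (T i) == T).
Proof.
apply/eqP/andP => [-> | [/eqP ti /eqP tT]]; first by rewrite eqxx upd_id.
by rewrite -tT; apply/funext => j; rewrite /upd; case: eqP => [->|].
Qed.

Lemma upd_eqE t T i b : (upd t i b == T) = (b == T i) && (upd t i (T i) == T).
Proof. by rewrite (tape_eqE _ _ i) upd_at upd_upd. Qed.

Lemma eq_updE t T i w : (t == upd T i w) = (t i == w) && (upd t i (T i) == T).
Proof.
rewrite (tape_eqE _ _ i) [upd T i w i]upd_at; congr (_ && _).
apply/eqP/eqP => e; apply/funext => j; have := congr1 (fun f => f j) e;
  by rewrite /upd; case: eqP => [->|].
Qed.
End Tapes.

Section DeterministicRuns.
Variables (K Sig : finType) (s : K) (blank : Sig)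
          (delta : K -> Sig -> (K + hstate) * Sig * dir) (x : seq Sig).

Local Notation drun := (drun s blank delta x).

Lemma drun_halted_stable m k : halted (drun m).1.1 -> drun (m + k) = drun m.
Proof.
move=> hm; elim: k => [|k IHk]; first by rewrite addn0.
by rewrite addnS /= IHk; move: hm; case: (drun m) => [[[q|hh] t] h].
Qed.

Lemma drun_halted_eq m k : halted (drun m).1.1 -> halted (drun k).1.1 -> drun m = drun k.
Proof.
wlog mk : m k / (m <= k)%N => [wlog_mk|hm _].
  by case: (leqP m k) => [|/ltnW] mk hm hk; [|symmetry]; apply: wlog_mk.
by rewrite -(subnKC mk) drun_halted_stable.
Qed.

Lemma drun_running_lt j N q T h :
  halted (drun N).1.1 -> drun j = (inl q, T, h) -> (j < N)%N.
Proof.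
move=> hN dj; rewrite ltnNge; apply/negP => /subnKC Nj.
by have := drun_halted_stable (j - N) hN; rewrite Nj dj => dN; move: hN; rewrite -dN.
Qed.
End DeterministicRuns.

(** * The simulating machine *)

Section SimulatorStates.
Variables (K Sig : finType).

Inductive sstate := Init | Run of K | Scramble of K & Sig | Verify of K & Sig.

Definition sstate_code (q : sstate) : option (K + K * Sig * bool) :=
  match q with
  | Init => None
  | Run q => Some (inl q)
  | Scramble q a => Some (inr (q, a, true))
  | Verify q a => Some (inr (q, a, false))
  end.
Definition sstate_decode (c : option (K + K * Sig * bool)) : sstate :=
  match c with
  | None => Init
  | Some (inl q) => Run q
  | Some (inr (q, a, true)) => Scramble q a
  | Some (inr (q, a, false)) => Verify q a
  end.
Lemma sstate_codeK : cancel sstate_code sstate_decode. Proof. by case. Qed.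
HB.instance Definition _ := Finite.copy sstate (can_type sstate_codeK).
End SimulatorStates.
Arguments Init {K Sig}.
Arguments Run {K Sig}.
Arguments Scramble {K Sig}.
Arguments Verify {K Sig}.


Section Simulation.
Variables (R : realType) (K Sig : finType) (s : K) (blank : Sig)
          (delta : K -> Sig -> (K + hstate) * Sig * dir).

Local Notation sstate := (sstate K Sig).
Local Notation outcome := (outcome Sig).
Local Notation meas := (meas R blank).

Definition target q a : Sig := (delta q a).1.2.

Definition resume (p : K + hstate) : sstate + hstate :=
  match p with inl q => inl (Run q) | inr h => inr h end.

Definition attempt q a (w : Sig) : (sstate + hstate) * dir * mkind :=
  let: (p, b, D) := delta q a in
  if w == b then (resume p, D, Basis) else (inl (Scramble q a), DStay, UniformTest).

Definition trans (q : sstate) (tau : outcome) : (sstate + hstate) * dir * mkind :=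
  match q, tau with
  | Init, _ => (inl (Run s), DStay, Basis)
  | Run q, Read a => attempt q a a
  | Scramble q a, _ => (inl (Verify q a), DStay, Basis)
  | Verify q a, Read w => attempt q a w
  (* unreachable: Run and Verify states are entered by a basis measurement *)
  | _, _ => (inl Init, DStay, Basis)
  end.

Definition qmeas (A : mkind) (c : outcome) (u v : Sig) : R[i] := ((meas A c u v)%:C)%C.

Lemma qmeas_projective A : projective (qmeas A).
Proof. exact/real_projective_complex/meas_projective. Qed.

Lemma qmeas_admissible A : admissible (qmeas A).
Proof. exact/projective_admissible/qmeas_projective. Qed.

Lemma qmeas_blank_test : exists A, blank_test Hit Miss blank (qmeas A).
Proof.
exists BlankTest; case=> [w||] u v /=; rewrite /qmeas /=; first exact: rmorph0.
all: exact: rmorph_nat.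
Qed.

Definition simulator : CQTM R := {|
  qs := Init; qblank := blank; qcb := Hit; qcbbar := Miss;
  qop := qmeas; qdelta := trans;
  qcb_neq := erefl; qop_adm := qmeas_admissible; qop_blank := qmeas_blank_test |}.

Local Notation M := simulator.

Lemma simulator_MQTM : is_MQTM M.
Proof. exact: qmeas_projective. Qed.

(** * Symbolic runs *)

(* A branch of the quantum run: its tape state is [amp], a real multiple of the
   basis tape [sc_tape], or in [Scramble] states of the projection of that basis
   tape by the last uniform test outcome at the head; [sc_steps] counts the
   steps of the classical machine simulated so far. *)
Record scfg := SCfg {
  sc_state : sstate + hstate;
  sc_last : outcome;
  sc_head : int;
  sc_tape : int -> Sig;
  sc_amp : R;
  sc_steps : nat }.

Definition scrambled (q : sstate + hstate) : bool :=
  if q is inl (Scramble _ _) then true else false.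

Definition completes (q : sstate) (tau : outcome) : bool :=
  match q, tau with
  | Run q, Read a => a == target q a
  | Verify q a, Read w => w == target q a
  | _, _ => false
  end.

Definition sstep (sg : scfg) (c : outcome) : scfg :=
  let: SCfg q tau h T lam j := sg in
  if q is inl q0 then
    let: (p, D, A) := trans q0 tau in
    let h' := move h D in
    let j' := (j + completes q0 tau)%N in
    if A is UniformTest then SCfg p c h' T lam j'
    else if scrambled q then
      if c is Read w then SCfg p c h' (upd T h' w) (lam * meas UniformTest tau w (T h')) j'
      else SCfg p c h' T 0 j'
    else SCfg p c h' T (lam * (c == Read (T h'))%:R) j'
  else sg.

Definition amp (sg : scfg) (t : int -> Sig) : R :=
  let: SCfg q tau h T lam _ := sg in
  lam * (if scrambled q then meas UniformTest tau (t h) (T h) * (upd t h (T h) == T)%:R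
         else (t == T)%:R).

Arguments scrambled : simpl never.
Arguments amp : simpl never.

Definition embed (sg : scfg) : qconfig M :=
  (sc_state sg, sc_last sg, sc_head sg, fun t => ((amp sg t)%:C)%C).

Lemma trans_shape q tau :
  let: (p, D, A) := trans q tau in
  match A with
  | BlankTest => False
  | Basis => ~~ scrambled p /\ (scrambled (inl q) -> D = DStay)
  | UniformTest => [/\ D = DStay, ~~ scrambled (inl q) & scrambled p]
  end.
Proof.
case: q => [|q0|q0 a|q0 a]; case: tau => [w||] //=; rewrite /attempt;
  by case: (delta _ _) => [[[p0|p0] b] D]; case: eqP.
Qed.

Lemma apply1_real A c i (phi : (int -> Sig) -> R) :
  apply1 M (qmeas A c) i (fun t => ((phi t)%:C)%C) =
  fun t => ((\sum_(b : Sig) meas A c (t i) b * phi (upd t i b))%:C)%C.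
Proof.
by apply/funext => t; rewrite /apply1 rmorph_sum; apply: eq_bigr => b _; rewrite rmorphM.
Qed.

Lemma basis_meas_point c i T t lam :
  \sum_(b : Sig) meas Basis c (t i) b * (lam * (upd t i b == T)%:R) =
  lam * (c == Read (T i))%:R * (t == T)%:R.
Proof.
case: c => [w||]; rewrite /meas /=; try by rewrite big1 ?mulr0 ?mul0r // => b _; rewrite mul0r.
rewrite (bigD1 w) //= big1 ?addr0; last by move=> b /negbTE ->; rewrite andbF mul0r.
rewrite eqxx andbT upd_eqE (tape_eqE t T i) Read_eqE.
case: (t i =P w) => [->|ne] /=; first by case: (w =P T i); rewrite /= ?mul1r ?mulr1 ?mulr0.
case: (w =P T i) => [e|_]; last by rewrite /= !mulr0 mul0r.
by rewrite -e (introF eqP ne) /= !mulr0 mul0r.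
Qed.

Lemma uniform_meas_point c i T t lam :
  \sum_(b : Sig) meas UniformTest c (t i) b * (lam * (upd t i b == T)%:R) =
  lam * (meas UniformTest c (t i) (T i) * (upd t i (T i) == T)%:R).
Proof.
rewrite (bigD1 (T i)) //= big1 ?addr0 => [|b /negbTE nb]; last by rewrite upd_eqE nb !mulr0.
by rewrite upd_eqE eqxx mulrCA.
Qed.

Lemma basis_meas_scrambled w tau i T t lam :
  \sum_(b : Sig) meas Basis (Read w) (t i) b *
     (lam * (meas UniformTest tau (upd t i b i) (T i) * (upd (upd t i b) i (T i) == T)%:R)) =
  lam * meas UniformTest tau w (T i) * (t == upd T i w)%:R.
Proof.
rewrite /meas (bigD1 w) //= big1 ?addr0; last by move=> b /negbTE ->; rewrite andbF mul0r.
rewrite eqxx andbT upd_at upd_upd eq_updE.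
by case: (t i == w); rewrite /= ?mul1r ?mul0r ?mulr0 ?mulrA.
Qed.

Lemma qstep_embed sg c : qstep M (embed sg) c = embed (sstep sg c).
Proof.
case: sg => [[q0|hh] tau h T lam j] //.
rewrite /qstep /sstep /embed /=.
have := trans_shape q0 tau; case: (trans q0 tau) => [[p D] []] //.
- case=> not_scr scr_stay; case scr: (scrambled (inl q0)) => /=; last first.
    congr (_, _); rewrite apply1_real; apply/funext => t.
    by rewrite /amp scr (negbTE not_scr) basis_meas_point.
  rewrite scr_stay //; case: c => [w||] /=; congr (_, _); rewrite apply1_real;
    apply/funext => t; rewrite /amp scr (negbTE not_scr).
  + by rewrite basis_meas_scrambled.
  + by rewrite big1 ?mul0r // => b _; rewrite /meas mul0r.
  + by rewrite big1 ?mul0r // => b _; rewrite /meas mul0r.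
- case=> -> not_scr scr /=; congr (_, _); rewrite apply1_real; apply/funext => t.
  by rewrite /amp (negbTE not_scr) scr uniform_meas_point.
Qed.

Lemma sqnorm_point (T : int -> Sig) (lam : R) :
  sqnorm M (fun t => ((lam * (t == T)%:R)%:C)%C) = (lam ^+ 2)%:E.
Proof.
rewrite /sqnorm (eq_esum (b := fun t => if t \in [set T]%classic then (lam ^+ 2)%:E else 0%E)).
  by rewrite -esum_mkcond esum_set1 // lee_fin sqr_ge0.
move=> t _; rewrite /sqmod mulrb; cbn [complex.Re complex.Im].
case: (t =P T) => [->|tT]; first by rewrite mem_set // mulr1 expr0n addr0.
by rewrite memNset // mulr0 expr0n addr0.
Qed.

Lemma sstep_Run q a h T lam j c :
  sstep (SCfg (inl (Run q)) (Read a) h T lam j) c =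
  sstep (SCfg (inl (Verify q a)) (Read a) h T lam j) c.
Proof. by []. Qed.

Definition weight (sg : scfg) : R :=
  let: SCfg q tau _ _ lam _ := sg in
  lam ^+ 2 * (if scrambled q then uniform_mass R tau else 1).

Lemma weight_ge0 sg : 0 <= weight sg.
Proof.
case: sg => q tau h T lam j; rewrite /weight mulr_ge0 ?sqr_ge0 //.
by case: ifP => _; rewrite ?uniform_mass_ge0.
Qed.

Lemma sum_weight_sstep sg :
  ~~ halted (sc_state sg) -> \sum_(c : outcome) weight (sstep sg c) = weight sg.
Proof.
case: sg => [[q0|hh] tau h T lam j] // _; rewrite /sstep.
have := trans_shape q0 tau; case: (trans q0 tau) => [[p D] []] //.
- case=> not_scr scr_stay; case scr: (scrambled (inl q0)); last first.
    under eq_bigr do rewrite /weight /= (negbTE not_scr) mulr1.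
    by rewrite sum_delta_sq /weight scr mulr1.
  rewrite sum_outcome /weight /= (negbTE not_scr) scr expr0n !mul0r !addr0.
  under eq_bigr do rewrite mulr1 exprMn.
  by rewrite -mulr_sumr sum_uniform_sq.
- case=> _ not_scr scr; under eq_bigr do rewrite /weight /= scr.
  by rewrite -mulr_sumr sum_uniform_mass /weight (negbTE not_scr) mulr1.
Qed.

Lemma weight_sstep_amp0 q tau h T j c : weight (sstep (SCfg q tau h T 0 j) c) = 0.
Proof.
rewrite /sstep; case: q => [q|hh]; last by rewrite /weight expr0n !mul0r.
case: (trans q tau) => [[p D] []]; rewrite /weight; last by rewrite /= expr0n mul0r.
all: by case: (scrambled _); [case: c => [w||] |]; rewrite /= ?mul0r expr0n mul0r.
Qed.

(* Bounds the expected number of steps needed to rewrite a cell: each round of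
   two measurements succeeds with probability at least [1/n^2]. *)
Definition write_budget : R := 2 * #|Sig|%:R ^+ 2.
Definition step_budget : R := write_budget + 1.

Lemma write_budget_ge1 : 1 <= write_budget.
Proof. by have := card_Sig_ge1 R blank; rewrite /write_budget; nra. Qed.

Lemma step_budget_ge1 : 1 <= step_budget.
Proof. by have := write_budget_ge1; rewrite /step_budget; lra. Qed.

Variable N : nat.

Definition potential (sg : scfg) : R :=
  let: SCfg q tau _ _ _ j := sg in
  let G := step_budget * (N - j)%:R in
  match q with
  | inr _ => 0
  | inl Init => G + write_budget + 1
  | inl (Run _) => G + write_budget
  | inl (Scramble _ _) => G + write_budget - 1
  | inl (Verify q a) => if tau == Read (target q a) then G else G + write_budget
  end.

Lemma potential_ge0 sg : 0 <= potential sg.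
Proof.
have := write_budget_ge1.
have : 0 <= step_budget * (N - sc_steps sg)%:R.
  by rewrite mulr_ge0 // (le_trans ler01 step_budget_ge1).
case: sg => [[[|q|q a|q a]|hh] tau h T lam j] /=; try lra.
by case: ifP => _; lra.
Qed.

Lemma budget_split j : (j < N)%N ->
  step_budget * (N - j)%:R = step_budget * (N - j.+1)%:R + step_budget.
Proof. by move=> jN; rewrite -(subnSK jN) -natr1 mulrDr mulr1. Qed.

Definition potential_decreases (sg : scfg) : Prop :=
  \sum_(c : outcome) weight (sstep sg c) * potential (sstep sg c)
    <= weight sg * (potential sg - 1).

Lemma potential_decreases_Verify q a w h T lam j : (j < N)%N ->
  potential_decreases (SCfg (inl (Verify q a)) (Read w) h T lam j).
Proof.
move=> jN; rewrite /potential_decreases /sstep /= /attempt /target /scrambled mulr1.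
have G_split := budget_split jN; have A_ge1 := step_budget_ge1.
have A_def : step_budget = write_budget + 1 by [].
have G'_ge0 : 0 <= step_budget * (N - j.+1)%:R by rewrite mulr_ge0 // (le_trans ler01).
case E: (delta q a) => [[p b] D] /=; case: (w =P b) => [<-|wb] /=.
- rewrite eqxx addn1; case: p {E} => [p|hh] /=.
    by rewrite -!mulr_suml sum_delta_sq mulr1 ler_wpM2l ?sqr_ge0 //; lra.
  by rewrite big1 => [|c _]; rewrite ?mulr0 // mulr_ge0 ?sqr_ge0 //; lra.
- rewrite -mulr_suml -mulr_sumr sum_uniform_mass mulr1 addn0 Read_eqE (introF eqP wb).
  by rewrite lexx.
Qed.

Lemma potential_decreases_Scramble q a tau h T lam j : T h != target q a ->
  potential_decreases (SCfg (inl (Scramble q a)) tau h T lam j).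
Proof.
move=> Tb; rewrite /potential_decreases /sstep /= /scrambled sum_outcome /= addn0.
rewrite expr0n !mul0r !addr0.
set b := target q a; set G := step_budget * _; set m := meas UniformTest tau.
have split_w w :
    (lam * m w (T h)) ^+ 2 * 1 * (if Read w == Read b then G else G + write_budget) =
    lam ^+ 2 * (G + write_budget) * m w (T h) ^+ 2 -
    lam ^+ 2 * write_budget * (m w (T h) ^+ 2 * (w == b)%:R).
  by rewrite Read_eqE; case: (w == b) => /=; ring.
under eq_bigr do rewrite split_w.
rewrite sumrB -!mulr_sumr sum_delta_r sum_uniform_sq -subr_ge0.
have := uniform_hit_le R blank tau Tb; rewrite exprMn -/m => hit.
have -> : lam ^+ 2 * uniform_mass R tau * (G + write_budget - 1 - 1) -
    (lam ^+ 2 * (G + write_budget) * uniform_mass R tau -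
     lam ^+ 2 * write_budget * m b (T h) ^+ 2) =
    lam ^+ 2 * (write_budget * m b (T h) ^+ 2 - 2 * uniform_mass R tau) by ring.
by rewrite mulr_ge0 ?sqr_ge0 // subr_ge0 /write_budget; lra.
Qed.

Variable x : seq Sig.

Local Notation drun := (drun s blank delta x).

Definition sinit : scfg := SCfg (inl Init) Hit 0 (input_tape blank x) 1 0.

Definition srun (hs : seq outcome) : scfg := foldl sstep sinit hs.

Lemma srun_rcons hs c : srun (rcons hs c) = sstep (srun hs) c.
Proof. by rewrite /srun foldl_rcons. Qed.

Lemma qrun_srun hs : qrun M x hs = embed (srun hs).
Proof.
elim/last_ind: hs => [|hs c IHhs]; last first.
  by rewrite /qrun foldl_rcons -/(qrun M x hs) IHhs qstep_embed srun_rcons.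
rewrite /qrun /qinit /embed /=; congr (_, _); apply/funext => t.
by rewrite /amp /ket_input /= mul1r; case: (t == _); rewrite ?rmorph1 ?rmorph0.
Qed.

Definition consistent (sg : scfg) : Prop :=
  let: SCfg q tau h T lam j := sg in
  lam != 0 ->
  match q with
  | inl Init => drun j = (inl s, T, h)
  | inl (Run q) => drun j = (inl q, T, h) /\ tau = Read (T h)
  | inl (Scramble q a) => drun j = (inl q, upd T h a, h) /\ T h <> target q a
  | inl (Verify q a) => drun j = (inl q, upd T h a, h) /\ tau = Read (T h)
  | inr hh => drun j = (inr hh, T, h)
  end.

Lemma consistent_sstep_Verify q a w h T lam j c :
  consistent (SCfg (inl (Verify q a)) (Read w) h T lam j) ->
  consistent (sstep (SCfg (inl (Verify q a)) (Read w) h T lam j) c).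
Proof.
move=> cons; rewrite /sstep /= /attempt /target.
case E: (delta q a) => [[p b] D] /=; case: (w =P b) => [wb|wb] /=.
- move=> /mulf_neq0_split [/cons [dj [tw]] /natr_bool_neq0/eqP c_read].
  have dj1 : drun (j + 1) = (p, T, move h D).
    by rewrite addn1 /= dj /= upd_at E upd_upd -wb tw upd_id.
  by case: p {E} dj1 => [p|hh] dj1 /=; first split.
- move=> /cons [dj [tw]]; rewrite addn0; split => // tb.
  by apply: wb; rewrite tw tb /target E.
Qed.

Lemma consistent_sstep sg c : consistent sg -> consistent (sstep sg c).
Proof.
case: sg => [[q0|hh] tau h T lam j] //.
case: q0 => [|q|q a|q a] cons.
- move=> /mulf_neq0_split [/cons dj /natr_bool_neq0/eqP c_read].
  by rewrite addn0; split.
- case: tau cons => [a||] cons; try by move=> /mulf_neq0_split [/cons [_]].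
  rewrite sstep_Run; apply: consistent_sstep_Verify => /cons [dj [->]].
  by rewrite upd_id.
- rewrite /sstep /=; case: c => [w||] /=; try by rewrite eqxx.
  move=> /mulf_neq0_split [/cons [dj _] _].
  by rewrite addn0 upd_upd upd_at.
- case: tau cons => [w||] cons; first exact: consistent_sstep_Verify.
  all: by move=> /mulf_neq0_split [/cons [_]].
Qed.

Lemma consistent_srun hs : consistent (srun hs).
Proof.
elim/last_ind: hs => [|hs c IHhs]; first by [].
by rewrite srun_rcons; apply: consistent_sstep.
Qed.

Hypothesis halts_by_N : halted (drun N).1.1.

Lemma consistent_potential_decreases sg :
  consistent sg -> ~~ halted (sc_state sg) -> potential_decreases sg.
Proof.
case: sg => [[q0|hh] tau h T lam j] // cons _.
have [-> | /cons {}cons] := eqVneq lam 0.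
  rewrite /potential_decreases big1 => [|c _]; last by rewrite weight_sstep_amp0 mul0r.
  by rewrite /weight expr0n !mul0r.
have running_lt := drun_running_lt halts_by_N.
case: q0 cons => [|q|q a|q a].
- move=> _; rewrite /potential_decreases /sstep /= /scrambled -!mulr_suml sum_delta_sq.
  by rewrite !mulr1 addn0 addrK.
- case=> dj ->; rewrite /potential_decreases; under eq_bigr do rewrite sstep_Run.
  apply: le_trans (potential_decreases_Verify q (T h) (T h) h T lam (running_lt _ _ _ _ dj)) _.
  rewrite /weight /scrambled /=; apply: ler_wpM2l; first by rewrite mulr_ge0 ?sqr_ge0.
  rewrite lerD2r; case: ifP => _; rewrite ?lexx // lerDl.
  exact: le_trans ler01 write_budget_ge1.
- by case=> dj /eqP Tb; apply: potential_decreases_Scramble.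
- by case=> dj ->; apply: potential_decreases_Verify (running_lt _ _ _ _ dj).
Qed.

Definition stopped (hs : seq outcome) : bool := halted (sc_state (srun hs)).

Lemma stopped_rcons hs c : stopped hs -> stopped (rcons hs c).
Proof. by rewrite /stopped srun_rcons; case: (srun hs) => [[q0|hh] tau h T lam j]. Qed.

Lemma halted_qrun hs : halted (qrun M x hs).1.1.1 = stopped hs.
Proof. by rewrite qrun_srun. Qed.

Lemma sqnorm_halted hs : stopped hs -> sqnorm M (qrun M x hs).2 = (weight (srun hs))%:E.
Proof.
rewrite qrun_srun /stopped; case: (srun hs) => [[q0|hh] tau h T lam j] //= _.
by rewrite /amp /weight /scrambled /= sqnorm_point mulr1.
Qed.

Lemma prob_time_srun :
  prob_time M x = fun k => (stop_prob (fun hs => weight (srun hs)) stopped k)%:E.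
Proof.
apply/funext => k; rewrite /prob_time /stop_prob -sumEFin.
apply: eq_big => [t|t /andP [t_stopped _]]; first by rewrite /halts_exactly size_tuple !halted_qrun.
by rewrite sqnorm_halted // -halted_qrun.
Qed.

Lemma weight_sinit : weight sinit = 1.
Proof. by rewrite /weight /scrambled /= expr1n mulr1. Qed.

Lemma sum_weight_srun_rcons hs : ~~ stopped hs ->
  \sum_(c : outcome) weight (srun (rcons hs c)) = weight (srun hs).
Proof. by move=> alive; under eq_bigr do rewrite srun_rcons; exact: sum_weight_sstep. Qed.

Lemma srun_potential_drift hs : ~~ stopped hs ->
  \sum_(c : outcome | ~~ stopped (rcons hs c))
      weight (srun (rcons hs c)) * potential (srun (rcons hs c))
    <= weight (srun hs) * (potential (srun hs) - 1).
Proof.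
move=> alive; apply: le_trans (consistent_potential_decreases (consistent_srun hs) alive).
rewrite big_mkcond; apply: ler_sum => c _; rewrite srun_rcons.
by case: ifP => _; rewrite ?mulr_ge0 ?weight_ge0 ?potential_ge0.
Qed.

Lemma simulator_halts_as : halts_as M x.
Proof.
rewrite /halts_as prob_time_srun.
exact: (@stop_prob_series _ _ (fun hs => weight (srun hs)) (fun hs => potential (srun hs))
  stopped weight_sinit isT (fun hs => weight_ge0 _) (fun hs => potential_ge0 _)
  stopped_rcons sum_weight_srun_rcons srun_potential_drift).
Qed.

Lemma simulator_expected_time : (expected_time M x <= (potential sinit)%:E)%E.
Proof.
rewrite /expected_time prob_time_srun.
exact: (@expected_stop_time_le _ _ (fun hs => weight (srun hs)) (fun hs => potential (srun hs))
  stopped weight_sinit isT (fun hs => weight_ge0 _) (fun hs => potential_ge0 _)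
  stopped_rcons sum_weight_srun_rcons srun_potential_drift).
Qed.

Lemma potential_sinit_le : potential sinit <= 2 * step_budget * N%:R.
Proof.
have N_ge1 : 1 <= N%:R :> R by rewrite ler1n lt0n; apply: contraTneq halts_by_N => ->.
have := step_budget_ge1; rewrite /potential /= subn0.
by have -> : step_budget = write_budget + 1 by []; nra.
Qed.

Lemma simulator_output o hs : dtm_output s blank delta x o ->
  halts_exactly M x hs -> (0 < sqnorm M (qrun M x hs).2)%E ->
  qout_is M (qrun M x hs).1.1.1 (qrun M x hs).2 (map_out id o).
Proof.
move=> [k dk] /andP [halted_hs _]; rewrite halted_qrun in halted_hs.
rewrite (sqnorm_halted halted_hs) lte_fin qrun_srun.
move: halted_hs (consistent_srun hs); rewrite /stopped.
case: (srun hs) => [[q0|hh] tau h T lam j] //= _ cons.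
rewrite /weight /scrambled /= mulr1 => lam_pos.
have lam0 : lam != 0 by apply: contraTneq lam_pos => ->; rewrite expr0n ltxx.
move: dk; case dk: (drun k) => [[[q|hk] t] h'] // out.
have [<- <- <-] : (inr hk, t, h') = (inr hh, T, h) :> dconfig K Sig.
  by rewrite -dk -(cons lam0); apply: drun_halted_eq; rewrite ?dk ?(cons lam0).
case: hk out {dk cons} => [->|->|[w [-> contents]]] //=.
exists (map id w); split => //; exists t, (lam%:C)%C; split.
- by apply/negP => /eqP/(congr1 (@complex.Re R)) /= lam_eq0; rewrite lam_eq0 eqxx in lam0.
- by rewrite /amp /scrambled /= eqxx mulr1.
- by move=> t' /negbTE t't; rewrite /amp /scrambled /= t't mulr0.
- by rewrite map_id.
Qed.

End Simulation.

Theorem theorem5 (R : realType) (K Sig : finType) (s : K) (blank : Sig)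
    (delta : K -> Sig -> (K + hstate) * Sig * dir) (f : nat -> nat) :
  dtm_time s blank delta f ->
  exists (M' : CQTM R) (emb : Sig -> qSQ M'),
    [/\ is_MQTM M', injective emb, emb blank = qblank M',
        (exists (c : R) (N : nat), forall x : seq Sig, valid_input blank x ->
            (N <= size x)%N ->
            (expected_time M' (map emb x) <= (c * (f (size x))%:R)%:E)%E)
      & forall (x : seq Sig) (o : tm_out Sig), valid_input blank x ->
          dtm_output s blank delta x o -> cqtm_output M' (map emb x) (map_out emb o)].
Proof.
move=> time_f; exists (simulator R s blank delta), id; split => //.
- exact: simulator_MQTM.
- exists (2 * step_budget R Sig), 0%N => x valid _; rewrite map_id.
  apply: le_trans (simulator_expected_time R (time_f x valid)) _.
  by rewrite lee_fin (potential_sinit_le R (time_f x valid)).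
- move=> x o valid out; rewrite map_id; split.
    by apply: simulator_halts_as (time_f x valid).
  by move=> hs; apply: simulator_output.
Qed.
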